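(* Let $k\ge 4$ and let $p,p'$ be two POPs of size $k$ having the same set $I$ of isolated vertices, such that $k-1\in I$ and $k-3,k-2,k\notin I$. Suppose that in both $p$ and $p'$, each of the labels $k-2$ and $k$ is greater than every label $x\in[k-3]\setminus I$. Suppose that the subposets of $p$ and $p'$ induced by $[k-3]\setminus I$ coincide, and that $k<_p k-2$ while $k-2<_{p'}k$. Then $p\sim p'$.
   Context: A partially ordered pattern (POP) $p$ of size $k$ is a partial order $\le_p$ on $[k]=\{1,\dots,k\}$. A permutation $\pi=\pi_1\cdots\pi_n$ contains $p$ if there are indices $i_1<\dots<i_k$ with $\pi_{i_j}<\pi_{i_m}$ whenever $j<_p m$; otherwise it avoids $p$. $\mathfrak S_n(p)$ is the set of permutations of $[n]$ avoiding $p$, and $p\sim q$ (Wilf-equivalence) means $|\mathfrak S_n(p)|=|\mathfrak S_n(q)|$ for all $n\ge 1$. A vertex is isolated if it is comparable to no other vertex. *)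

From mathcomp Require Import all_boot all_order all_fingroup.
Set Implicit Arguments. Unset Strict Implicit. Unset Printing Implicit Defensive.

(* A partially ordered pattern (POP) of size k, on labels [k] = {1,...,k}
   (as natural numbers), is given by its strict order relation
   [lt x y] meaning x <_p y. *)
Definition in_k (k x : nat) : bool := (1 <= x <= k).

Definition is_pop (k : nat) (lt : rel nat) : Prop :=
  [/\ (forall x y, lt x y -> in_k k x && in_k k y),
      (forall x, ~~ lt x x) &
      (forall x y z, lt x y -> lt y z -> lt x z)].

(* Permutations of [n] are represented by 'S_n (values 0..n-1, which is
   order-isomorphic to [n]).  s contains the POP lt of size k iff there are
   positions i_1 < ... < i_k with s(i_j) < s(i_m) whenever j <_p m.
   Position i_j (j = 1..k) is f (j-1) for f : 'I_k -> 'I_n. *)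
Definition contains_pop (k : nat) (lt : rel nat) (n : nat) (s : 'S_n) : bool :=
  [exists f : {ffun 'I_k -> 'I_n},
     [forall a : 'I_k, forall b : 'I_k,
        ((a < b)%N ==> (f a < f b)%N) &&
        (lt a.+1 b.+1 ==> (s (f a) < s (f b))%N)]].

Definition num_avoiders (k : nat) (lt : rel nat) (n : nat) : nat :=
  #|[set s : 'S_n | ~~ contains_pop k lt s]|.

Definition wilf_equiv (k : nat) (p q : rel nat) : Prop :=
  forall n : nat, 1 <= n -> num_avoiders k p n = num_avoiders k q n.

Definition isolated (k : nat) (lt : rel nat) (x : nat) : bool :=
  [forall y : 'I_k, ~~ lt x y.+1 && ~~ lt y.+1 x].

From mathcomp Require Import all_boot all_order all_fingroup.
From mathcomp Require Import zify.
Set Implicit Arguments. Unset Strict Implicit. Unset Printing Implicit Defensive.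

(* The label k-1 is isolated and every non-isolated label of [k-3] lies below k-2
   and k, so a permutation s contains p (resp. p') exactly when it has positions
   a + 2 <= c with s c < s a (resp. s a < s c) and, left of a, an occurrence of the
   common restriction of p and p' to [k-3] whose non-isolated entries lie below
   min (s a) (s c).  Call c eligible when such a lower occurrence lies left of c below
   s c.  Lower occurrences can be chosen with their non-isolated entries at ineligible
   positions; hence reassigning the values at eligible positions, so that each one
   keeps a value it is eligible with, changes neither lower occurrences nor
   eligibility.  On such a class, avoiding p (resp. p') is a condition on the
   arrangement of the values at eligible positions only, and both numbers of good
   arrangements obey the same recurrence: the first eligible position takes the least
   admissible value (resp. the largest value) or, when the next eligible position is
   adjacent, possibly the second one, the first then moving to the next position. *)

Lemma all2_map (T : Type) (r : nat -> nat -> bool) (f g : T -> nat) L :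
  all2 r (map f L) (map g L) = all (fun x => r (f x) (g x)) L.
Proof. by elim: L => //= x L ->. Qed.

Lemma all2_nth (r : nat -> nat -> bool) s t : all2 r s t ->
  forall i, i < size s -> r (nth 0 s i) (nth 0 t i).
Proof. by elim: s t => [|x s IH] [|y t] //= /andP[rxy /IH {}IH] [|i] //= /IH. Qed.

Lemma pairwise_sorted_all (T : eqType) (lt r : rel T) L :
  irreflexive lt -> transitive lt -> sorted lt L -> (forall x y, ~~ lt x y -> r x y) ->
  pairwise r L = all (fun x => all (r x) L) L.
Proof.
move=> irr tr + triv; elim: L => //= x L IH xL.
have /allP xlt := order_path_min tr xL.
rewrite IH ?(path_sorted xL) // triv ?irr //=; congr andb.
apply: eq_in_all => y yL /=; rewrite triv //.
by apply/negP => yx; move: (irr x); rewrite (tr _ _ _ (xlt y yL) yx).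
Qed.

Lemma all2_guard_all (a r : pred nat) s t : size s = size t -> all a s ->
  all2 (fun e y => a e ==> r y) s t = all r t.
Proof.
elim: s t => [|e s IH] [|y t] //= [st] /andP[ae sa].
by rewrite ae IH.
Qed.

Section CountPermutations.
Variable T : eqType.
Implicit Types (x y : T) (t V : seq T) (P Q : pred (seq T)).

Lemma perm_cons_rem x t V : x \in V -> perm_eq (x :: t) V = perm_eq t (rem x V).
Proof. by move=> xV; rewrite (permPr (perm_to_rem xV)) perm_cons. Qed.

Lemma count_cons_gt1 (a : pred T) x y t V :
  perm_eq (x :: t) V -> y \in t -> a x -> a y -> 1 < count a V.
Proof.
move=> pt yt ax ay; rewrite -(seq.permP pt) /= ax add1n ltnS -has_count.
by apply/hasP; exists y.
Qed.

Lemma count_permutations_head P Q V x0 : x0 \in V ->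
  (forall x t, perm_eq (x :: t) V -> P (x :: t) = (x == x0) && Q t) ->
  count P (permutations V) = count Q (permutations (rem x0 V)).
Proof.
move=> x0V PE; rewrite -!size_filter -[RHS](size_map (cons x0)); apply: perm_size.
have cons_inj : injective (cons x0) by move=> ? ? [].
apply: uniq_perm; rewrite ?map_inj_uniq ?filter_uniq ?permutations_uniq //.
move=> [|x t]; rewrite mem_filter mem_permutations.
  have /negPf-> : ~~ perm_eq [::] V by apply: contraL x0V => /perm_mem <-.
  by rewrite andbF; apply/esym/mapP => -[].
apply/andP/mapP => [[Pxt pt]|[u]].
  move: Pxt; rewrite PE // => /andP[/eqP xE Qt]; subst x.
  by exists t; rewrite // mem_filter mem_permutations Qt -(perm_cons_rem _ x0V).
rewrite mem_filter mem_permutations => /andP[Qu pu] [-> ->].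
have pv : perm_eq (x0 :: u) V by rewrite (perm_cons_rem _ x0V).
by rewrite PE // eqxx.
Qed.

Lemma count_permutations_head2 P Q1 Q2 V x0 x1 :
  x0 \in V -> x1 \in V -> x1 != x0 ->
  (forall x y t, perm_eq [:: x, y & t] V ->
     P [:: x, y & t] = (x == x0) && Q1 (y :: t) || [&& x == x1, y == x0 & Q2 t]) ->
  count P (permutations V) =
  count Q1 (permutations (rem x0 V)) + count Q2 (permutations (rem x0 (rem x1 V))).
Proof.
move=> x0V x1V x10 PE.
pose P1 u := if u is x :: u' then (x == x0) && Q1 u' else false.
pose R u := if u is y :: t then (y == x0) && Q2 t else false.
pose P2 u := if u is x :: u' then (x == x1) && R u' else false.
have P1P2 : {in permutations V, P =1 predU P1 P2}.
  move=> [|x [|y t]]; rewrite mem_permutations => pt.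
  - by move: x0V; rewrite -(perm_mem pt).
  - move: (perm_mem pt x0) (perm_mem pt x1); rewrite x0V x1V !inE => /eqP<- /eqP.
    by move=> x10'; rewrite x10' eqxx in x10.
  - by rewrite PE.
have disj : count (predI P1 P2) (permutations V) = 0.
  rewrite (eq_count (a2 := pred0)) ?count_pred0 // => -[|x u] //=.
  by case: (eqVneq x x0) => [->|] //; rewrite [x0 == x1]eq_sym (negPf x10) andbF.
rewrite (eq_in_count P1P2) -[LHS]addn0 -disj count_predUI.
rewrite (count_permutations_head (Q := Q1) x0V) // (count_permutations_head (Q := R) x1V) //.
have x0V' : x0 \in rem x1 V by rewrite rem_mem // eq_sym.
by rewrite (count_permutations_head (Q := Q2) x0V').
Qed.

End CountPermutations.

(** * Counting admissible arrangements *)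

(* Positions at distance at least 2 leave room for the isolated label k-1 between
   them. *)
Fixpoint far_free (bad : nat -> nat -> nat -> bool) (s t : seq nat) : bool :=
  match s, t with
  | d :: s', x :: t' =>
    all2 (fun d' y => (d.+2 <= d') ==> ~~ bad d x y) s' t' && far_free bad s' t'
  | _, _ => true
  end.

Lemma far_free_map (T : Type) bad (f g : T -> nat) L :
  far_free bad (map f L) (map g L) =
  pairwise (fun x y => ((f x).+2 <= f y) ==> ~~ bad (f x) (g x) (g y)) L.
Proof. by elim: L => //= x L ->; rewrite all2_map. Qed.

Section Admissible.
Variable B : nat -> nat -> bool.

Definition admissible bad s t := all2 B s t && far_free bad s t.

Lemma admissible_cons bad d s x t : sorted ltn (d :: s) -> size s = size t ->
  admissible bad (d :: s) (x :: t) =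
  [&& B d x, all (fun y => ~~ bad d x y) (drop (head 0 s == d.+1) t)
    & admissible bad s t].
Proof.
move=> srt st; rewrite /admissible /=.
suff -> : all2 (fun d' y => (d.+2 <= d') ==> ~~ bad d x y) s t =
          all (fun y => ~~ bad d x y) (drop (head 0 s == d.+1) t).
  by case: (B d x); case: (all2 B s t); case: all; case: far_free.
case: s t srt st => [|e s] [|y t] //= /andP[de srt] [st].
have far : all (fun e' => d.+2 <= e') s.
  by apply/allP=> e' /(allP (order_path_min ltn_trans srt)); exact: leq_ltn_trans de.
case: (eqVneq e d.+1) => [->|ne] /=; first by rewrite ltnn drop0 all2_guard_all.
have de2 : d.+2 <= e by rewrite ltn_neqAle eq_sym ne.
by rewrite de2 all2_guard_all.
Qed.

Lemma count_admissible0 bad d s V : count (B d) V = 0 ->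
  count (admissible bad (d :: s)) (permutations V) = 0.
Proof.
move=> c0; apply/eqP; rewrite eqn0Ngt -has_count; apply/hasPn => -[|x t] //.
rewrite mem_permutations => pt; apply: contra_eqN c0 => /andP[/andP[Bx _] _].
by rewrite -lt0n -has_count; apply/hasP; exists x; rewrite // -(perm_mem pt) mem_head.
Qed.

(* With [B = lower_occ s0], positions [d < d'] holding [x] and [y] complete an
   occurrence of p, resp. p'. *)
Definition bad_p d x y := B d y && (y < x).
Definition bad_p' (d x y : nat) := x < y.

Lemma count_admissible_p_forced d s V x0 :
  sorted ltn (d :: s) -> size V = (size s).+1 ->
  x0 \in V -> B d x0 -> (forall y, y \in V -> B d y -> x0 <= y) ->
  (head 0 s != d.+1) || (count (B d) V == 1) ->
  count (admissible bad_p (d :: s)) (permutations V) =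
  count (admissible bad_p s) (permutations (rem x0 V)).
Proof.
move=> srt sV x0V Bx0 x0min forced; apply: count_permutations_head => // x t pt.
have st : size s = size t by have := perm_size pt; rewrite sV => -[].
have tV y : y \in t -> y \in V by move=> yt; rewrite -(perm_mem pt) inE yt orbT.
rewrite admissible_cons // andbA; congr (_ && _).
apply/andP/eqP => [[Bx xmin]|->]; last first.
  split=> //; apply/allP => y /mem_drop yt; apply/negP => /andP[By].
  by rewrite ltnNge x0min ?tV.
have xV : x \in V by rewrite -(perm_mem pt) mem_head.
case: (eqVneq x x0) => [//|xx0].
have x0t : x0 \in t by move: x0V; rewrite -(perm_mem pt) inE eq_sym (negPf xx0).
case/orP: forced => [/negPf nadj|/eqP c1].
  move: xmin; rewrite nadj drop0 => /allP/(_ x0 x0t); rewrite /bad_p Bx0 /=.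
  by rewrite ltn_neqAle eq_sym xx0 x0min.
by have := count_cons_gt1 pt x0t Bx Bx0; rewrite c1.
Qed.

Lemma count_admissible_p'_forced d s W top :
  sorted ltn (d :: s) -> size W = (size s).+1 ->
  top \in W -> B d top -> (forall y, y \in W -> y <= top) ->
  (head 0 s != d.+1) || (count (B d) W == 1) ->
  count (admissible bad_p' (d :: s)) (permutations W) =
  count (admissible bad_p' s) (permutations (rem top W)).
Proof.
move=> srt sW topW Btop topmax forced; apply: count_permutations_head => // x t pt.
have st : size s = size t by have := perm_size pt; rewrite sW => -[].
have tW y : y \in t -> y \in W by move=> yt; rewrite -(perm_mem pt) inE yt orbT.
rewrite admissible_cons // andbA; congr (_ && _).
apply/andP/eqP => [[Bx xmax]|->]; last first.
  by split=> //; apply/allP => y /mem_drop yt; rewrite /bad_p' -leqNgt topmax ?tW.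
have xW : x \in W by rewrite -(perm_mem pt) mem_head.
case: (eqVneq x top) => [//|xtop].
have topt : top \in t by move: topW; rewrite -(perm_mem pt) inE eq_sym (negPf xtop).
case/orP: forced => [/negPf nadj|/eqP c1].
  move: xmax; rewrite nadj drop0 => /allP/(_ top topt).
  by rewrite /bad_p' ltn_neqAle xtop topmax.
by have := count_cons_gt1 pt topt Bx Btop; rewrite c1.
Qed.

End Admissible.

Section AdmissibleMonotone.
Variable B : nat -> nat -> bool.
Hypothesis B_mono : forall d d' v v', d <= d' -> v <= v' -> B d v -> B d' v'.

Lemma count_admissible_p_split d s V x0 x1 :
  sorted ltn [:: d, d.+1 & s] -> uniq V -> size V = (size s).+2 ->
  (forall v, B d.+1 v -> B d v) ->
  x0 \in V -> B d x0 -> (forall y, y \in V -> B d y -> x0 <= y) ->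
  x1 \in rem x0 V -> B d x1 -> (forall y, y \in rem x0 V -> B d y -> x1 <= y) ->
  count (admissible B (bad_p B) [:: d, d.+1 & s]) (permutations V) =
  count (admissible B (bad_p B) (d.+1 :: s)) (permutations (rem x0 V)) +
  count (admissible B (bad_p B) s) (permutations (rem x0 (rem x1 V))).
Proof.
move=> srt uV sV adj x0V Bx0 x0min x1r Bx1 x1min.
have /andP[x10 x1V] : (x1 != x0) && (x1 \in V) by move: x1r; rewrite mem_rem_uniq // inE.
apply: count_permutations_head2 => // x y t pt.
have st : size s = size t by have := perm_size pt; rewrite sV => -[].
have /and3P[_ ynt _] : uniq [:: x, y & t] by rewrite (perm_uniq pt).
have tV z : z \in t -> z \in V by move=> zt; rewrite -(perm_mem pt) !inE zt !orbT.
have srt' : sorted ltn (d.+1 :: s) := path_sorted srt.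
rewrite admissible_cons //= ?st // eqxx /= drop0.
case: (eqVneq x x0) => [->|xx0] /=.
  rewrite Bx0 [x0 == x1]eq_sym (negPf x10) orbF (_ : all _ t = true) //.
  by apply/allP => z /tV zV; apply/negP => /andP[Bz]; rewrite ltnNge x0min.
have xV : x \in V by rewrite -(perm_mem pt) mem_head.
apply/and3P/and3P => [[Bx xmin A]|[/eqP-> /eqP yx0 At]]; last subst y.
  have x0x : x0 < x by rewrite ltn_neqAle eq_sym xx0 x0min.
  have x0y : x0 = y.
    move: x0V; rewrite -(perm_mem pt) !inE eq_sym (negPf xx0) /= => /orP[/eqP //|x0t].
    by move/allP: xmin => /(_ x0 x0t); rewrite /bad_p Bx0 x0x.
  have xr : x \in rem x0 V by rewrite rem_mem.
  have xx1 : x = x1.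
    apply/eqP/negPn/negP => xx1; have x1t : x1 \in t.
      by move: x1V; rewrite -(perm_mem pt) !inE eq_sym (negPf xx1) -x0y (negPf x10).
    move/allP: xmin => /(_ x1 x1t); rewrite /bad_p Bx1 /=.
    by rewrite ltn_neqAle eq_sym xx1 x1min.
  by rewrite xx1 -x0y !eqxx; move: A; rewrite admissible_cons // => /and3P[].
split=> //.
  apply/allP => z zt; apply/negP => /andP[Bz].
  have zr : z \in rem x0 V by rewrite rem_mem ?tV //; apply: contraNneq ynt => <-.
  by rewrite ltnNge x1min.
rewrite admissible_cons ?At ?(B_mono (leqnSn d) (leqnn x0) Bx0) ?andbT //=.
apply/allP => z /mem_drop zt; apply/negP => /andP[/adj Bz].
by rewrite ltnNge x0min ?tV.
Qed.

Lemma count_admissible_p'_split d s W top w2 :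
  sorted ltn [:: d, d.+1 & s] -> uniq W -> size W = (size s).+2 ->
  top \in W -> (forall y, y \in W -> y <= top) ->
  w2 \in rem top W -> B d w2 -> (forall y, y \in rem top W -> y <= w2) ->
  count (admissible B bad_p' [:: d, d.+1 & s]) (permutations W) =
  count (admissible B bad_p' (d.+1 :: s)) (permutations (rem top W)) +
  count (admissible B bad_p' s) (permutations (rem top (rem w2 W))).
Proof.
move=> srt uW sW topW topmax w2r Bw2 w2max.
have /andP[w2top w2W] : (w2 != top) && (w2 \in W) by move: w2r; rewrite mem_rem_uniq // inE.
have Btop : B d top := B_mono (leqnn d) (topmax w2 w2W) Bw2.
apply: count_permutations_head2 => // x y t pt.
have st : size s = size t by have := perm_size pt; rewrite sW => -[].
have /and3P[_ ynt _] : uniq [:: x, y & t] by rewrite (perm_uniq pt).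
have tW z : z \in t -> z \in W by move=> zt; rewrite -(perm_mem pt) !inE zt !orbT.
have srt' : sorted ltn (d.+1 :: s) := path_sorted srt.
rewrite admissible_cons //= ?st // eqxx /= drop0.
case: (eqVneq x top) => [->|xtop] /=.
  rewrite Btop [top == w2]eq_sym (negPf w2top) orbF (_ : all _ t = true) //.
  by apply/allP => z /tW zW; rewrite /bad_p' -leqNgt topmax.
have xW : x \in W by rewrite -(perm_mem pt) mem_head.
apply/and3P/and3P => [[Bx xmax A]|[/eqP-> /eqP ytop At]]; last subst y.
  have xlt : x < top by rewrite ltn_neqAle xtop topmax.
  have topy : top = y.
    move: topW; rewrite -(perm_mem pt) !inE eq_sym (negPf xtop) /= => /orP[/eqP //|topt].
    by move/allP: xmax => /(_ top topt); rewrite /bad_p' xlt.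
  have xr : x \in rem top W by rewrite rem_mem.
  have xw2 : x = w2.
    apply/eqP/negPn/negP => xw2; have w2t : w2 \in t.
      by move: w2W; rewrite -(perm_mem pt) !inE eq_sym (negPf xw2) -topy (negPf w2top).
    move/allP: xmax => /(_ w2 w2t); rewrite /bad_p'.
    by rewrite ltn_neqAle xw2 w2max.
  by rewrite xw2 -topy !eqxx; move: A; rewrite admissible_cons // => /and3P[].
split=> //.
  apply/allP => z zt; rewrite /bad_p' -leqNgt w2max // rem_mem ?tW //.
  by apply: contraNneq ynt => <-.
rewrite admissible_cons ?At ?(B_mono (leqnSn d) (leqnn top) Btop) ?andbT //=.
by apply/allP => z /mem_drop zt; rewrite /bad_p' -leqNgt topmax ?tW.
Qed.

Lemma exists_min_admissible d V : 0 < count (B d) V ->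
  exists x0, [/\ x0 \in V, B d x0 & forall y, y \in V -> B d y -> x0 <= y].
Proof.
rewrite -has_count => /hasP[v vV Bv].
have exV : exists v, (v \in V) && B d v by exists v; rewrite vV.
case: (ex_minnP exV) => x0 /andP[x0V Bx0] x0min; exists x0; split=> // y yV By.
by apply: x0min; rewrite yV.
Qed.

Lemma exists_max_admissible d W : 0 < count (B d) W ->
  exists top, [/\ top \in W, B d top & forall y, y \in W -> y <= top].
Proof.
rewrite -has_count => /hasP[v vW Bv].
have exW : exists v, v \in W by exists v.
have ubW y : y \in W -> y <= \max_(z <- W) z by move=> yW; apply: leq_bigmax_seq.
case: (ex_maxnP exW ubW) => top topW topmax; exists top; split=> //.
exact: B_mono (leqnn d) (topmax v vW) Bv.
Qed.

Lemma count_rem_admissible d e x V : d <= e -> x \in V -> B d x ->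
  count (B e) (rem x V) = (count (B e) V).-1.
Proof. by move=> de xV Bx; rewrite count_rem xV (B_mono de (leqnn x) Bx) subn1. Qed.

Lemma count_rem_admissible_eq d (s : seq nat) x (V : seq nat) y (W : seq nat) :
  {in s, forall e, d <= e} -> x \in V -> B d x -> y \in W -> B d y ->
  {in s, forall e, count (B e) V = count (B e) W} ->
  {in s, forall e, count (B e) (rem x V) = count (B e) (rem y W)}.
Proof. by move=> ds xV Bx yW By cVW e es; rewrite !(count_rem_admissible (ds e es)) ?cVW. Qed.

Theorem count_admissible_p_p' s V W :
  sorted ltn s -> (forall e, e \in s -> e.+1 \in s -> forall v, B e.+1 v -> B e v) ->
  uniq V -> uniq W -> size V = size s -> size W = size s ->
  {in s, forall e, count (B e) V = count (B e) W} ->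
  count (admissible B (bad_p B) s) (permutations V) =
  count (admissible B bad_p' s) (permutations W).
Proof.
have [n] := ubnP (size s); elim: n s V W => // n IH [|d s] V W /= szn srt adj uV uW sV sW cVW.
  by case: V W sV sW {uV uW cVW} => [|? ?] [|? ?].
have cVWd := cVW d (mem_head d s).
have [c0|cpos] := posnP (count (B d) V); first by rewrite !count_admissible0 // -cVWd.
have cposW : 0 < count (B d) W by rewrite -cVWd.
have [x0 [x0V Bx0 x0min]] := exists_min_admissible cpos.
have [top [topW Btop topmax]] := exists_max_admissible cposW.
have ds : {in s, forall e, d <= e}.
  by move=> e /(allP (order_path_min ltn_trans srt)); apply: ltnW.
have adj' e : e \in s -> e.+1 \in s -> forall v, B e.+1 v -> B e v.
  by move=> es e1s; apply: adj; rewrite inE ?es ?e1s orbT.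
have cVW' : {in s, forall e, count (B e) V = count (B e) W}.
  by move=> e es; apply: cVW; rewrite inE es orbT.
have IHrem : count (admissible B (bad_p B) s) (permutations (rem x0 V)) =
             count (admissible B bad_p' s) (permutations (rem top W)).
  apply: IH; rewrite ?rem_uniq ?size_rem ?sV ?sW ?(path_sorted srt) //.
  exact: count_rem_admissible_eq ds x0V Bx0 topW Btop cVW'.
case: (boolP ((head 0 s == d.+1) && (1 < count (B d) V))); last first.
  rewrite negb_and -leqNgt leq_eqVlt ltnS leqn0 (negPf (lt0n_neq0 cpos)) orbF => forced.
  rewrite (count_admissible_p_forced srt _ x0V) ?(count_admissible_p'_forced srt _ topW) //.
  by rewrite -cVWd.
case/andP=> hs c2.
have [s' sE] : exists s', s = d.+1 :: s' by case E: s hs => [|e s'] //= /eqP->; exists s'.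
subst s.
have [x1 [x1r Bx1 x1min]] : exists x1, [/\ x1 \in rem x0 V, B d x1 &
    forall y, y \in rem x0 V -> B d y -> x1 <= y].
  by apply: exists_min_admissible; rewrite (count_rem_admissible (leqnn d)) // ltn_predRL.
have [w2 [w2r Bw2 w2max]] : exists w2, [/\ w2 \in rem top W, B d w2 &
    forall y, y \in rem top W -> y <= w2].
  by apply: exists_max_admissible; rewrite (count_rem_admissible (leqnn d)) // ltn_predRL -cVWd.
have adj_d : forall v, B d.+1 v -> B d v by apply: adj; rewrite !inE eqxx ?orbT.
rewrite (count_admissible_p_split srt uV _ adj_d x0V Bx0 x0min x1r Bx1 x1min) //.
rewrite (count_admissible_p'_split srt uW _ topW topmax w2r Bw2 w2max) // IHrem.
have x0r : x0 \in rem x1 V.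
  by rewrite rem_mem //; move: x1r; rewrite mem_rem_uniq // inE eq_sym => /andP[].
have topr : top \in rem w2 W.
  by rewrite rem_mem //; move: w2r; rewrite mem_rem_uniq // inE eq_sym => /andP[].
have ds' : {in s', forall e, d <= e} by move=> e es; apply: ds; rewrite inE es orbT.
congr (_ + _); apply: IH; rewrite ?rem_uniq ?size_rem ?sV ?sW ?(mem_rem x1r) ?(mem_rem w2r) //.
- by move: szn; rewrite /= !ltnS => /ltnW.
- exact: path_sorted (path_sorted srt).
- by move=> e es e1s; apply: adj'; rewrite inE ?es ?e1s orbT.
apply: (count_rem_admissible_eq ds' x0r Bx0 topr Btop).
apply: (count_rem_admissible_eq ds' (mem_rem x1r) Bx1 (mem_rem w2r) Bw2).
by move=> e es; apply: cVW'; rewrite inE es orbT.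
Qed.

End AdmissibleMonotone.

(** * Lower occurrences and eligible positions *)

Lemma isolated_unrelated k (q : rel nat) x y :
  isolated k q x -> in_k k y -> ~~ q x y && ~~ q y x.
Proof.
move=> /forallP iso /andP[y0 yk]; have y'k : y.-1 < k by rewrite prednK.
by have := iso (Ordinal y'k); rewrite /= prednK.
Qed.

Section LowerOccurrences.
Variables (m : nat) (p : rel nat).
Local Notation k := m.+4.

Definition active x := ~~ isolated k p x.

Lemma related_active (i j : 'I_m.+1) : p i.+1 j.+1 -> active i.+1 && active j.+1.
Proof.
have ink (l : 'I_m.+1) : in_k k l.+1 by have := ltn_ord l; rewrite /in_k; lia.
move=> pij; apply/andP; split; apply/negP => /isolated_unrelated.
  by move=> /(_ _ (ink j))/andP[/negP].
by move=> /(_ _ (ink i))/andP[_ /negP].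
Qed.

Variable n : nat.
Implicit Types (s : 'S_n) (g : {ffun 'I_m.+1 -> 'I_n}).

Definition embeds s g := [forall i : 'I_m.+1, forall j : 'I_m.+1,
  ((i < j) ==> (g i < g j)) && (p i.+1 j.+1 ==> (s (g i) < s (g j)))].

Definition below s (a v : nat) g :=
  [forall i : 'I_m.+1, (g i < a) && (active i.+1 ==> (s (g i) < v))].

(* An occurrence, before position [a], of the restriction of p to [k-3] whose
   non-isolated entries are below [v]; the ordinal [i] stands for the label [i.+1]. *)
Definition lower_occ s (a v : nat) := [exists g, embeds s g && below s a v g].

(* Position [c] can host the label k-2 or k. *)
Definition eligible s (c : 'I_n) := lower_occ s c (s c).

Definition off_eligible s g := [forall i : 'I_m.+1, active i.+1 ==> ~~ eligible s (g i)].

Lemma below_trans s (a a' v v' : nat) g :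
  a <= a' -> v <= v' -> below s a v g -> below s a' v' g.
Proof.
move=> aa vv /forallP gb; apply/forallP => i; case/andP: (gb i) => ga gv.
rewrite (leq_trans ga aa); apply/implyP => /(implyP gv) /leq_trans; exact.
Qed.

Lemma lower_occ_mono s (a a' v v' : nat) :
  a <= a' -> v <= v' -> lower_occ s a v -> lower_occ s a' v'.
Proof.
move=> aa vv /existsP[g /andP[eg bg]]; apply/existsP; exists g.
by rewrite eg (below_trans aa vv).
Qed.

(* An entry at an eligible position is traded for the occurrence witnessing its
   eligibility, which lies further left and lower. *)
Lemma lower_occ_ineligible s (a v : nat) : lower_occ s a v ->
  exists g, [&& embeds s g, below s a v g & off_eligible s g].
Proof.
elim/ltn_ind: v a => v IH a /existsP[g /andP[eg bg]].
case: (boolP (off_eligible s g)) => [ng|].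
  by exists g; rewrite eg bg ng.
case/forallPn => i; rewrite negb_imply negbK => /andP[ai ei].
case/andP: (forallP bg i) => gia /implyP/(_ ai) giv.
have [g' /and3P[eg' bg' ng']] := IH _ giv _ ei.
by exists g'; rewrite eg' ng' (below_trans (ltnW gia) (ltnW giv)).
Qed.

Lemma embeds_agree s s' g : (forall i : 'I_m.+1, active i.+1 -> s' (g i) = s (g i)) ->
  embeds s' g = embeds s g.
Proof.
move=> sg; apply: eq_forallb => i; apply: eq_forallb => j; congr (_ && _).
case pij: (p _ _) => //=; have /andP[ai aj] := related_active pij.
by rewrite !sg.
Qed.

Lemma below_agree s s' (a v : nat) g :
  (forall i : 'I_m.+1, active i.+1 -> s' (g i) = s (g i)) ->
  below s' a v g = below s a v g.
Proof.
move=> sg; apply: eq_forallb => i; congr (_ && _).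
by case: (boolP (active _)) => //= /sg ->.
Qed.

Lemma lower_occ_transfer s s' :
  (forall c, ~~ eligible s c -> s' c = s c) ->
  (forall c, eligible s c -> lower_occ s c (s' c)) ->
  forall a v, lower_occ s' a v = lower_occ s a v.
Proof.
move=> same moved a v.
have agree g : off_eligible s g ->
    forall i : 'I_m.+1, active i.+1 -> s' (g i) = s (g i).
  by move=> /forallP ng i ai; apply: same; apply: (implyP (ng i)).
apply/idP/idP; last first.
  case/lower_occ_ineligible => g /and3P[eg bg /agree sg].
  by apply/existsP; exists g; rewrite (embeds_agree sg) (below_agree _ _ sg) eg bg.
move=> /existsP[g /andP[eg bg]].
case: (boolP (off_eligible s g)) => [/agree sg|].
  by apply/existsP; exists g; rewrite -(embeds_agree sg) -(below_agree _ _ sg) eg bg.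
case/forallPn => i; rewrite negb_imply negbK => /andP[ai ei].
case/andP: (forallP bg i) => gia /implyP/(_ ai) giv.
exact: lower_occ_mono (ltnW gia) (ltnW giv) (moved _ ei).
Qed.

Section Placement.
Variables (g : {ffun 'I_m.+1 -> 'I_n}) (a b c : 'I_n).

Definition place (x : nat) : 'I_n :=
  if x <= m.+1 then g (inord x.-1)
  else if x == m.+2 then a else if x == m.+3 then b else c.

Variant place_spec (x : nat) : 'I_n -> Type :=
  | PlaceLow (i : 'I_m.+1) of x = i.+1 : place_spec x (g i)
  | PlaceA of x = m.+2 : place_spec x a
  | PlaceB of x = m.+3 : place_spec x b
  | PlaceC of x = m.+4 : place_spec x c.

Lemma placeP x : in_k k x -> place_spec x (place x).
Proof.
rewrite /place /in_k => /andP[x0 xk]; case: leqP => [xl|xg].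
  have xi : x.-1 < m.+1 by rewrite prednK.
  by apply: PlaceLow; rewrite inordK // prednK.
case: eqP => [->|x2]; first exact: PlaceA.
case: eqP => [->|x3]; first exact: PlaceB.
by apply: PlaceC; lia.
Qed.

Lemma place_mono : (forall i j : 'I_m.+1, i < j -> g i < g j) -> (forall i, g i < a) ->
  a < b -> b < c -> {in in_k k &, {homo place : x y / x < y}}.
Proof.
move=> g_mono ga ab bc x y xk yk.
case: (placeP xk) => [i|||] ->; case: (placeP yk) => [j|||] -> xy;
  first [ exact: g_mono xy | exact: ga | exact: ltn_trans (ga _) ab
        | exact: ltn_trans (ga _) (ltn_trans ab bc) | exact: ab | exact: ltn_trans ab bc
        | exact: bc | by move: (ltn_ord j) xy; clear; lia | by move: xy; clear; lia ].
Qed.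

End Placement.

Section TopPair.
Variables (q : rel nat) (up : bool).
Hypothesis q_pop : is_pop k q.
Hypothesis q_iso : forall x, in_k k x -> isolated k q x = isolated k p x.
Hypothesis isolated_B : isolated k p m.+3.
Hypothesis q_low : forall i j : 'I_m.+1, q i.+1 j.+1 = p i.+1 j.+1.
Hypothesis q_above : forall i : 'I_m.+1, active i.+1 -> q i.+1 m.+2 && q i.+1 m.+4.
Hypothesis q_AC : q m.+2 m.+4 = up.
Hypothesis q_CA : q m.+4 m.+2 = ~~ up.

Lemma q_active x y : q x y -> active x && active y.
Proof.
move=> qxy; case: q_pop => ink _ _.
have /andP[xk yk] := ink _ _ qxy.
rewrite /active -!q_iso //; apply/andP; split; apply/negP => /isolated_unrelated.
  by move=> /(_ _ yk)/andP[/negP].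
by move=> /(_ _ xk)/andP[_ /negP].
Qed.

Lemma q_unrelated_B x : in_k k x -> ~~ q m.+3 x && ~~ q x m.+3.
Proof. by apply: isolated_unrelated; rewrite q_iso ?isolated_B // /in_k /= leqnSn. Qed.

Lemma q_top_low (i : 'I_m.+1) x : x \in [:: m.+2; m.+4] -> ~~ q x i.+1.
Proof.
have [_ q_irr q_trans] := q_pop.
move=> xt; apply/negP => qxi; have /andP[_ ai] := q_active qxi.
have /andP[q2 q4] := q_above ai.
by move: xt; rewrite !inE => /orP[] /eqP xE; subst x;
  [have := q_trans _ _ _ qxi q2 | have := q_trans _ _ _ qxi q4]; rewrite (negPf (q_irr _)).
Qed.

Lemma contains_pop_top_pair (s : 'S_n) : contains_pop k q s ->
  [exists a : 'I_n, exists c : 'I_n, [&& a.+2 <= c, if up then s a < s c else s c < s a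
                                        & lower_occ s a (if up then s a else s c)]].
Proof.
move=> /existsP[f /forallP fP].
have f_mono (i j : 'I_k) : i < j -> f i < f j.
  by move=> ij; case/andP: (forallP (fP i) j) => /implyP/(_ ij).
have f_rel (i j : 'I_k) : q i.+1 j.+1 -> s (f i) < s (f j).
  by move=> qij; case/andP: (forallP (fP i) j) => _ /implyP/(_ qij).
have hA : m.+1 < k by lia.
have hB : m.+2 < k by lia.
have hlow : m.+1 <= k by lia.
pose lA := Ordinal hA; pose lB := Ordinal hB; pose lC := @ord_max m.+3.
apply/existsP; exists (f lA); apply/existsP; exists (f lC).
rewrite (leq_ltn_trans (f_mono lA lB (ltnSn _)) (f_mono lB lC (ltnSn _))) /=.
have fAC : if up then s (f lA) < s (f lC) else s (f lC) < s (f lA).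
  by case: up q_AC q_CA => qAC qCA; apply: f_rel; rewrite ?qAC ?qCA.
rewrite fAC; apply/existsP; exists [ffun i => f (widen_ord hlow i)].
apply/andP; split; apply/forallP => i.
  apply/forallP => j; rewrite !ffunE; apply/andP; split; apply/implyP => ij.
    exact: f_mono.
  by apply: f_rel; rewrite (q_low i j).
rewrite ffunE (f_mono _ lA) //=; apply/implyP => ai.
have /andP[qA qC] := q_above ai.
have := f_rel (widen_ord hlow i) lA qA; have := f_rel (widen_ord hlow i) lC qC.
by case: up {fAC}.
Qed.

Lemma place_rel s g (a b c : 'I_n) :
  (if up then s a < s c else s c < s a) -> embeds s g ->
  (forall i : 'I_m.+1, active i.+1 -> s (g i) < if up then s a else s c) ->
  {in in_k k &, forall x y, q x y -> s (place g a b c x) < s (place g a b c y)}.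
Proof.
move=> lohi eg g_lo x y xk yk; set lo := if up then _ else _ in g_lo.
have [_ q_irr _] := q_pop.
have g_rel (i j : 'I_m.+1) : p i.+1 j.+1 -> s (g i) < s (g j).
  by move=> pij; case/andP: (forallP (forallP eg i) j) => _ /implyP/(_ pij).
have lo_a : lo <= s a by rewrite /lo; case: (up) lohi => // /ltnW.
have lo_c : lo <= s c by rewrite /lo; case: (up) lohi => // /ltnW.
case: (placeP g a b c xk) => [i|||] xE qxy; subst x.
- have /andP[ai _] := q_active qxy.
  case: (placeP g a b c yk) qxy => [j|||] yE qxy; subst y.
  + by apply: g_rel; rewrite -q_low.
  + exact: leq_trans (g_lo i ai) lo_a.
  + by case/andP: (q_unrelated_B xk) qxy => _ /negPf->.
  + exact: leq_trans (g_lo i ai) lo_c.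
- case: (placeP g a b c yk) qxy => [j|||] yE qxy; subst y.
  + by rewrite (negPf (q_top_low j _)) ?mem_head in qxy.
  + by rewrite (negPf (q_irr _)) in qxy.
  + by case/andP: (q_unrelated_B xk) qxy => _ /negPf->.
  + by move: lohi; rewrite -q_AC qxy.
- by case/andP: (q_unrelated_B yk) qxy => /negPf->.
- case: (placeP g a b c yk) qxy => [j|||] yE qxy; subst y.
  + by rewrite (negPf (q_top_low j _)) ?inE ?eqxx ?orbT in qxy.
  + by move: lohi; rewrite -(negbK up) -q_CA qxy.
  + by case/andP: (q_unrelated_B xk) qxy => _ /negPf->.
  + by rewrite (negPf (q_irr _)) in qxy.
Qed.

Lemma top_pair_contains_pop (s : 'S_n) :
  [exists a : 'I_n, exists c : 'I_n, [&& a.+2 <= c, if up then s a < s c else s c < s a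
                                        & lower_occ s a (if up then s a else s c)]] ->
  contains_pop k q s.
Proof.
move=> /existsP[a /existsP[c /and3P[ac lohi /existsP[g /andP[eg /forallP bg]]]]].
have bn : a.+1 < n by apply: leq_trans ac (ltnW (ltn_ord c)).
pose b := Ordinal bn.
have g_mono (i j : 'I_m.+1) : i < j -> g i < g j.
  by move=> ij; case/andP: (forallP (forallP eg i) j) => /implyP/(_ ij).
have ga (i : 'I_m.+1) : g i < a by case/andP: (bg i).
have g_lo (i : 'I_m.+1) : active i.+1 -> s (g i) < if up then s a else s c.
  by move=> ai; case/andP: (bg i) => _ /implyP/(_ ai).
have ink (l : 'I_k) : in_k k l.+1 by rewrite /in_k /= ltn_ord.
apply/existsP; exists [ffun i : 'I_k => place g a b c i.+1].
apply/forallP => i; apply/forallP => j; rewrite !ffunE.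
apply/andP; split; apply/implyP => h; last exact: (place_rel b lohi eg g_lo (ink i) (ink j) h).
have ab : a < b by [].
have bc : b < c by [].
exact: (place_mono g_mono ga ab bc (ink i) (ink j) h).
Qed.

Lemma contains_popE (s : 'S_n) :
  contains_pop k q s = [exists a : 'I_n, exists c : 'I_n,
    [&& a.+2 <= c, if up then s a < s c else s c < s a
      & lower_occ s a (if up then s a else s c)]].
Proof. by apply/idP/idP; [apply: contains_pop_top_pair | apply: top_pair_contains_pop]. Qed.

End TopPair.

(** * Classes of permutations *)

Definition perm_class (s0 : 'S_n) : {set 'S_n} :=
  [set s : 'S_n | [forall c, if eligible s0 c then lower_occ s0 c (s c) else s c == s0 c]].

Lemma perm_classE s0 s : s \in perm_class s0 ->
  (forall c, ~~ eligible s0 c -> s c = s0 c) /\ (forall c, eligible s0 c -> lower_occ s0 c (s c)).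
Proof.
rewrite inE => /forallP cls; split=> c; have := cls c.
  by move=> + /negPf ec; rewrite ec => /eqP.
by move=> + ec; rewrite ec.
Qed.

Lemma perm_class_occ s0 s : s \in perm_class s0 -> forall a v, lower_occ s a v = lower_occ s0 a v.
Proof. by case/perm_classE; apply: lower_occ_transfer. Qed.

Lemma perm_class_eligible s0 s : s \in perm_class s0 -> eligible s =1 eligible s0.
Proof.
move=> cls c; have [same moved] := perm_classE cls.
rewrite /eligible (perm_class_occ cls) -/(eligible s0 c).
case: (boolP (eligible s0 c)) => [/moved //|nec].
by rewrite same //; apply: negbTE.
Qed.

Lemma perm_class_refl s0 : s0 \in perm_class s0.
Proof. by rewrite inE; apply/forallP => c; case: ifP. Qed.

Lemma perm_class_eq s0 s : s \in perm_class s0 -> perm_class s = perm_class s0.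
Proof.
move=> cls; have [same _] := perm_classE cls.
apply/setP => u; rewrite !inE; apply: eq_forallb => c.
rewrite (perm_class_eligible cls) (perm_class_occ cls).
by case: (boolP (eligible s0 c)) => // /same->.
Qed.

Definition eligibles s0 := [seq c <- enum 'I_n | eligible s0 c].
Definition elig_positions s0 : seq nat := [seq val c | c <- eligibles s0].
Definition elig_values s0 s : seq nat := [seq val (s c) | c <- eligibles s0].

Lemma mem_eligibles s0 c : (c \in eligibles s0) = eligible s0 c.
Proof. by rewrite mem_filter mem_enum andbT. Qed.

Lemma eligibles_uniq s0 : uniq (eligibles s0).
Proof. by rewrite filter_uniq ?enum_uniq. Qed.

Lemma eligibles_sorted s0 : sorted (fun c c' : 'I_n => c < c') (eligibles s0).
Proof.
apply: sorted_filter; first exact: ltn_trans.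
have : sorted ltn (map val (enum 'I_n)) by rewrite val_enum_ord iota_ltn_sorted.
by rewrite sorted_map.
Qed.

Lemma elig_positions_sorted s0 : sorted ltn (elig_positions s0).
Proof. by rewrite sorted_map; apply: eligibles_sorted. Qed.

Lemma elig_values_uniq s0 s : uniq (elig_values s0 s).
Proof. by rewrite map_inj_uniq ?eligibles_uniq // => c c' /val_inj/perm_inj. Qed.

Lemma perm_class_values s0 s : s \in perm_class s0 ->
  perm_eq (elig_values s0 s) (elig_values s0 s0).
Proof.
move=> cls; have [same _] := perm_classE cls.
have image (s1 s2 : 'S_n) : (forall c, ~~ eligible s0 c -> s1 c = s2 c) ->
    {subset elig_values s0 s1 <= elig_values s0 s2}.
  move=> agree v /mapP[c]; rewrite mem_eligibles => ec ->.
  apply/mapP; exists ((s2^-1)%g (s1 c)); last by rewrite permKV.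
  rewrite mem_eligibles; apply: contraTT ec => nec.
  by have /perm_inj <- : s1 ((s2^-1)%g (s1 c)) = s1 c by rewrite agree ?permKV.
apply: uniq_perm; rewrite ?elig_values_uniq // => v.
by apply/idP/idP; apply: image => c /same.
Qed.

Lemma perm_class_admissible s0 s : s \in perm_class s0 ->
  all2 (lower_occ s0) (elig_positions s0) (elig_values s0 s).
Proof.
case/perm_classE => _ moved; rewrite all2_map; apply/allP => c.
by rewrite mem_eligibles; apply: moved.
Qed.

Lemma far_free_eligibles bad s0 s :
  far_free bad (elig_positions s0) (elig_values s0 s) =
  all (fun a : 'I_n => all (fun c : 'I_n => (a.+2 <= c) ==> ~~ bad a (s a) (s c)) (eligibles s0))
      (eligibles s0).
Proof.
rewrite far_free_map (pairwise_sorted_all (lt := fun c c' : 'I_n => c < c')).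
- by [].
- by move=> c; rewrite ltnn.
- exact: ltn_trans.
- exact: eligibles_sorted.
by move=> a c; rewrite -leqNgt => ca; rewrite ltnNge (leq_trans ca) ?leqnSn.
Qed.

Lemma perm_class_values_inj s0 : {in perm_class s0 &, injective (elig_values s0)}.
Proof.
move=> s1 s2 cls1 cls2 E; apply/permP => c.
case: (boolP (eligible s0 c)) => [ec|nec].
  by move/eq_in_map: E => /(_ c); rewrite mem_eligibles => /(_ ec)/val_inj.
by rewrite (perm_classE cls1).1 ?(perm_classE cls2).1.
Qed.

Lemma perm_class_values_surj s0 t : perm_eq t (elig_values s0 s0) ->
  all2 (lower_occ s0) (elig_positions s0) t ->
  exists2 s, s \in perm_class s0 & elig_values s0 s = t.
Proof.
move=> pt a2; set L := eligibles s0.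
have st : size t = size L by rewrite (perm_size pt) size_map.
have ut : uniq t by rewrite (perm_uniq pt) elig_values_uniq.
have tL i : i < size L -> exists2 c, c \in L & nth 0 t i = s0 c.
  move=> iL; have : nth 0 t i \in elig_values s0 s0 by rewrite -(perm_mem pt) mem_nth ?st.
  by case/mapP => c cL ->; exists c.
have iL c : eligible s0 c -> index c L < size L by rewrite index_mem mem_eligibles.
pose f c := if eligible s0 c then insubd c (nth 0 t (index c L)) else s0 c.
have fE c : eligible s0 c -> val (f c) = nth 0 t (index c L).
  by move=> ec; rewrite /f ec val_insubd; have [c' _ ->] := tL _ (iL c ec); rewrite ltn_ord.
have f_out c c' : eligible s0 c -> ~~ eligible s0 c' -> f c != f c'.
  move=> ec nec'; rewrite -(inj_eq val_inj) fE // /f (negPf nec').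
  have [c'' c''L ->] := tL _ (iL c ec); apply/eqP => /val_inj/perm_inj E.
  by move: c''L; rewrite E mem_eligibles (negPf nec').
have finj : injective f.
  move=> c c'; case: (boolP (eligible s0 c)) => ec; case: (boolP (eligible s0 c')) => ec' E.
  - move: (congr1 val E); rewrite !fE // => /eqP; rewrite nth_uniq ?st ?iL // => /eqP.
    by move/(congr1 (nth c L)); rewrite !nth_index ?mem_eligibles.
  - by have := f_out _ _ ec ec'; rewrite E eqxx.
  - by have := f_out _ _ ec' ec; rewrite E eqxx.
  - by move: E; rewrite /f (negPf ec) (negPf ec') => /perm_inj.
exists (perm finj).
  rewrite inE; apply/forallP => c; rewrite permE; case: ifP => ec; last by rewrite /f ec.
  have := all2_nth (i := index c L) a2; rewrite size_map => /(_ (iL c ec)).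
  by rewrite fE // (nth_map c) ?iL // nth_index ?mem_eligibles.
apply: (@eq_from_nth _ 0); first by rewrite size_map st.
move=> i; rewrite size_map => iLi; have [c0 _ _] := tL i iLi.
have ei : eligible s0 (nth c0 L i) by rewrite -mem_eligibles mem_nth.
by rewrite (nth_map c0) // permE fE // index_uniq ?eligibles_uniq.
Qed.

Lemma card_perm_class_avoiders q bad s0 :
  (forall s, s \in perm_class s0 ->
     far_free bad (elig_positions s0) (elig_values s0 s) = ~~ contains_pop k q s) ->
  #|[set s in perm_class s0 | ~~ contains_pop k q s]| =
  count (admissible (lower_occ s0) bad (elig_positions s0)) (permutations (elig_values s0 s0)).
Proof.
move=> avoidE; rewrite cardE -(size_map (elig_values s0)) -size_filter; apply: perm_size.
apply: uniq_perm; rewrite ?filter_uniq ?permutations_uniq //.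
  rewrite map_inj_in_uniq ?enum_uniq // => s1 s2.
  by rewrite !mem_enum => /setIdP[cls1 _] /setIdP[cls2 _]; apply: perm_class_values_inj.
move=> t; rewrite mem_filter mem_permutations; apply/mapP/andP.
  case=> s; rewrite mem_enum => /setIdP[cls av] ->.
  by rewrite /admissible perm_class_admissible // avoidE // perm_class_values.
case=> /andP[a2 ff] pt; have [s cls E] := perm_class_values_surj pt a2.
by exists s; rewrite // mem_enum; apply/setIdP; rewrite -avoidE // E.
Qed.

Section Avoiders.
Hypothesis active_last : ~~ isolated k p m.+1.

(* The largest lower label k-3 is non-isolated, so an occurrence reaching position
   [d] has its entry there below [v]. *)
Lemma lower_occ_adjacent s (d : 'I_n) v :
  eligible s d -> lower_occ s d.+1 v -> lower_occ s d v.
Proof.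
move=> ed /existsP[g /andP[eg /forallP bg]].
case: (boolP [forall i : 'I_m.+1, g i < d]) => [/forallP gd|].
  apply/existsP; exists g; rewrite eg; apply/forallP => i.
  by rewrite gd; case/andP: (bg i).
case/forallPn => i; rewrite -leqNgt => dgi.
have gi_max : g i <= g ord_max.
  case: (eqVneq i ord_max) => [->//|ne]; apply: ltnW.
  have lt : i < @ord_max m by rewrite ltn_neqAle leq_ord andbT; apply: contra ne => /eqP/val_inj->.
  by case/andP: (forallP (forallP eg i) ord_max) => /implyP/(_ lt).
case/andP: (bg ord_max) => gmax /implyP/(_ active_last) sv.
have dE : g ord_max = d by apply/val_inj/eqP; rewrite eqn_leq -ltnS gmax (leq_trans dgi).
by rewrite dE in sv; apply: lower_occ_mono (leqnn d) (ltnW sv) ed.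
Qed.

Variable p' : rel nat.
Hypothesis contains_p : forall s : 'S_n, contains_pop k p s =
  [exists a : 'I_n, exists c : 'I_n, [&& a.+2 <= c, s c < s a & lower_occ s a (s c)]].
Hypothesis contains_p' : forall s : 'S_n, contains_pop k p' s =
  [exists a : 'I_n, exists c : 'I_n, [&& a.+2 <= c, s a < s c & lower_occ s a (s a)]].

Lemma perm_class_avoid_p s0 s : s \in perm_class s0 ->
  far_free (bad_p (lower_occ s0)) (elig_positions s0) (elig_values s0 s) =
  ~~ contains_pop k p s.
Proof.
move=> cls; rewrite far_free_eligibles contains_p.
apply/allP/existsPn => [ok a|none a aL].
  apply/existsPn => c; apply/negP => /and3P[ac ca occ].
  have aL : a \in eligibles s0.
    rewrite mem_eligibles -(perm_class_eligible cls).
    exact: lower_occ_mono (leqnn a) (ltnW ca) occ.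
  have cL : c \in eligibles s0.
    rewrite mem_eligibles -(perm_class_eligible cls).
    exact: lower_occ_mono (ltnW (ltnW ac)) (leqnn _) occ.
  by have := allP (ok a aL) c cL; rewrite ac /bad_p -(perm_class_occ cls) occ ca.
apply/allP => c cL; apply/implyP => ac; apply/negP => /andP[occ ca].
by have := existsPn (none a) c; rewrite ac ca (perm_class_occ cls) occ.
Qed.

Lemma perm_class_avoid_p' s0 s : s \in perm_class s0 ->
  far_free bad_p' (elig_positions s0) (elig_values s0 s) = ~~ contains_pop k p' s.
Proof.
move=> cls; rewrite far_free_eligibles contains_p'.
apply/allP/existsPn => [ok a|none a aL].
  apply/existsPn => c; apply/negP => /and3P[ac ac' occ].
  have aL : a \in eligibles s0 by rewrite mem_eligibles -(perm_class_eligible cls).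
  have cL : c \in eligibles s0.
    rewrite mem_eligibles -(perm_class_eligible cls).
    exact: lower_occ_mono (ltnW (ltnW ac)) (ltnW ac') occ.
  by have := allP (ok a aL) c cL; rewrite ac /bad_p' ac'.
apply/allP => c cL; apply/implyP => ac; apply/negP; rewrite /bad_p' => ac'.
move: aL; rewrite mem_eligibles -(perm_class_eligible cls) /eligible => occ.
by have := existsPn (none a) c; rewrite ac ac' occ.
Qed.

Lemma card_perm_class_avoiders_eq s0 :
  #|[set s in perm_class s0 | ~~ contains_pop k p s]| =
  #|[set s in perm_class s0 | ~~ contains_pop k p' s]|.
Proof.
rewrite (card_perm_class_avoiders (perm_class_avoid_p (s0 := s0))).
rewrite (card_perm_class_avoiders (perm_class_avoid_p' (s0 := s0))).
have mono d d' v v' : d <= d' -> v <= v' -> lower_occ s0 d v -> lower_occ s0 d' v'.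
  exact: lower_occ_mono.
have adj e : e \in elig_positions s0 -> e.+1 \in elig_positions s0 ->
    forall v, lower_occ s0 e.+1 v -> lower_occ s0 e v.
  case/mapP => c cL -> _ v; have ec : eligible s0 c by rewrite -mem_eligibles.
  exact: lower_occ_adjacent ec.
by apply: (count_admissible_p_p' mono (elig_positions_sorted s0) adj);
  rewrite ?elig_values_uniq ?size_map.
Qed.

Lemma num_avoiders_eq : num_avoiders k p n = num_avoiders k p' n.
Proof.
have split_classes (q : rel nat) : num_avoiders k q n =
    \sum_(K : {set 'S_n}) #|[set s in [set s | ~~ contains_pop k q s] | perm_class s == K]|.
  rewrite /num_avoiders -sum1_card (partition_big perm_class predT) //=.
  by apply: eq_bigr => K _; rewrite -sum1_card; apply: eq_bigl => s; rewrite !inE.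
rewrite !split_classes; apply: eq_bigr => K _.
case: (pickP (fun s0 => perm_class s0 == K)) => [s0 /eqP<- | none].
  have restrict (q : rel nat) :
      [set s in [set s | ~~ contains_pop k q s] | perm_class s == perm_class s0] =
      [set s in perm_class s0 | ~~ contains_pop k q s].
    apply/setP => s; apply/setIdP/setIdP => [[av /eqP cls]|[cls av]].
      by rewrite inE in av; rewrite -cls perm_class_refl.
    by rewrite inE av (perm_class_eq cls).
  by rewrite !restrict card_perm_class_avoiders_eq.
have empty (q : rel nat) :
    [set s in [set s | ~~ contains_pop k q s] | perm_class s == K] = set0.
  by apply/setP => s; rewrite !inE none andbF.
by rewrite !empty.
Qed.

End Avoiders.

End LowerOccurrences.

Lemma pop_asym k (q : rel nat) x y : is_pop k q -> q x y -> q y x = false.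
Proof. by case=> _ irr tr qxy; apply/negP => /(tr _ _ _ qxy); apply/negP. Qed.

Theorem theorem1p3 (k : nat) (p p' : rel nat) :
  4 <= k ->
  is_pop k p -> is_pop k p' ->
  (forall x, in_k k x -> isolated k p x = isolated k p' x) ->
  isolated k p (k - 1) ->
  ~~ isolated k p (k - 3) -> ~~ isolated k p (k - 2) -> ~~ isolated k p k ->
  (forall x, 1 <= x <= k - 3 -> ~~ isolated k p x ->
     p x (k - 2) && p x k) ->
  (forall x, 1 <= x <= k - 3 -> ~~ isolated k p x ->
     p' x (k - 2) && p' x k) ->
  (forall x y, 1 <= x <= k - 3 -> 1 <= y <= k - 3 ->
     ~~ isolated k p x -> ~~ isolated k p y -> p x y = p' x y) ->
  p k (k - 2) -> p' (k - 2) k ->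
  wilf_equiv k p p'.
Proof.
case: k => [|[|[|[|m]]]] // _; rewrite !subSS !subn0.
(* k-2 and k are not isolated since p k (k-2). *)
move=> p_pop p'_pop iso isoB act_last _ _ above above' same pCA p'AC n _.
have low (i : 'I_m.+1) : 0 < i.+1 <= m.+1 by rewrite ltn_ord.
have ink (i : 'I_m.+1) : in_k m.+4 i.+1 by have := ltn_ord i; rewrite /in_k; lia.
have iso_false (q : rel nat) x y :
    isolated m.+4 q x -> in_k m.+4 y -> q x y = false /\ q y x = false.
  by move=> /isolated_unrelated/[apply] /andP[/negPf-> /negPf->].
have p'_low (i j : 'I_m.+1) : p' i.+1 j.+1 = p i.+1 j.+1.
  case: (boolP (isolated m.+4 p i.+1)) => [ii|ai].
    by rewrite (iso_false _ _ _ ii (ink j)).1 (iso_false p' _ _ _ (ink j)).1 // -iso.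
  case: (boolP (isolated m.+4 p j.+1)) => [ij|aj]; last by rewrite same ?low.
  by rewrite (iso_false _ _ _ ij (ink i)).2 (iso_false p' _ _ _ (ink i)).2 // -iso.
apply: (num_avoiders_eq act_last) => s.
  rewrite (@contains_popE m p n p false) //.
  - by move=> i; apply: above.
  by rewrite (pop_asym p_pop pCA).
rewrite (@contains_popE m p n p' true) //.
- by move=> x /iso.
- by move=> i; apply: above'.
by rewrite (pop_asym p'_pop p'AC).
Qed.
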